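(* Let $A,B$ be closed linear relations in $X^2$ such that $\{A,B\}$ is a dual pair with $(A^* )_s|_{D(B)}=B_s$ and $(B^* )_s|_{D(A)}=A_s$. Suppose $B^*(0)\cap N(A^* )=\{0\}$, $A^*(0)\cap N(B^* )=\{0\}$, and that $\tilde A\in\mathrm{Ext}\{A,B\}$ satisfies $\dim(D(B^* )/D(\tilde A))=\dim(D(\tilde A)/D(A))$. Then $\tilde A$ is a quasi-selfadjoint extension of $\{A,B\}$.
   Context: $X$ is a complex Hilbert space; linear relations are linear subspaces of $X^2=X\times X$, with domain $D(T)$, $N(T)=\{x:(x,0)\in T\}$, $T(0)=\{y:(0,y)\in T\}$. Adjoint: $T^*=\{(f,g):\langle g,x\rangle=\langle f,y\rangle\ \forall(x,y)\in T\}$. For closed $T$: $T_\infty=\{(0,y)\in T\}$, $T_s=T\ominus T_\infty$ (an operator with $D(T_s)=D(T)$). Closed relations $A,B$ form a dual pair $\{A,B\}$ if $A\subset B^*$ (equivalently $B\subset A^*$). $\mathrm{Ext}\{A,B\}$ is the set of closed relations $\tilde A$ with $A\subset\tilde A\subset B^*$. An extension $\tilde A\in\mathrm{Ext}\{A,B\}$ is quasi-selfadjoint if $\dim(D(\tilde A)/D(A))=\dim(D(\tilde A^* )/D(B))$. *)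

From mathcomp Require Import all_boot all_algebra complex reals.
Import GRing.Theory Num.Theory.
Set Implicit Arguments. Unset Strict Implicit. Unset Printing Implicit Defensive.
Local Open Scope ring_scope.
Local Open Scope complex_scope.

Section LinRel.
Variables (R : realType) (X : lmodType R[i]) (ip : X -> X -> R[i]).

Definition nsq (x : X) : R[i] := ip x x.

Definition cvg_to (u : nat -> X) (x : X) : Prop :=
  forall e : R[i], 0 < e -> exists N : nat, forall n, (N <= n)%N -> `|nsq (u n - x)| < e.

Definition cauchy (u : nat -> X) : Prop :=
  forall e : R[i], 0 < e -> exists N : nat, forall n m, (N <= n)%N -> (N <= m)%N ->
    `|nsq (u n - u m)| < e.

Definition is_hilbert : Prop :=
  [/\ (forall a x y z, ip (a *: x + y) z = a * ip x z + ip y z),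
      (forall x y, ip y x = (ip x y)^*),
      (forall x, 0 <= ip x x),
      (forall x, ip x x = 0 -> x = 0)
    & (forall u, cauchy u -> exists x, cvg_to u x)].

Definition linrel := X -> X -> Prop.

Definition is_linrel (T : linrel) : Prop :=
  [/\ T 0 0,
      (forall x y x' y', T x y -> T x' y' -> T (x + x') (y + y'))
    & (forall a x y, T x y -> T (a *: x) (a *: y))].

(* closed: closed subset of X^2 with the product (Hilbert) topology *)
Definition closed_rel (T : linrel) : Prop :=
  forall (u v : nat -> X) x y, (forall n, T (u n) (v n)) ->
    cvg_to u x -> cvg_to v y -> T x y.

Definition closed_linrel (T : linrel) : Prop := is_linrel T /\ closed_rel T.

Definition dom (T : linrel) : X -> Prop := fun x => exists y, T x y.
Definition ker (T : linrel) : X -> Prop := fun x => T x 0.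
Definition mul0 (T : linrel) : X -> Prop := fun y => T 0 y.

Definition adj (T : linrel) : linrel :=
  fun f g => forall x y, T x y -> ip g x = ip f y.

Definition subrel (S T : linrel) : Prop := forall x y, S x y -> T x y.

(* T_infty = {(0,y) in T};  T_s = T ⊖ T_infty (orthogonal complement in X^2
   w.r.t. <(x,y),(u,v)> = <x,u> + <y,v>) *)
Definition Tinf (T : linrel) : linrel := fun x y => x = 0 /\ T 0 y.
Definition Ts (T : linrel) : linrel :=
  fun x y => T x y /\ (forall u v, Tinf T u v -> ip x u + ip y v = 0).

Definition restr (T : linrel) (D : X -> Prop) : linrel := fun x y => T x y /\ D x.

Definition releq (S T : linrel) : Prop := forall x y, S x y <-> T x y.

Definition dual_pair (A B : linrel) : Prop :=
  closed_linrel A /\ closed_linrel B /\ subrel A (adj B).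

Definition Ext (A B At : linrel) : Prop :=
  closed_linrel At /\ subrel A At /\ subrel At (adj B).

(* {e_i} is a Hamel basis of V modulo W (i.e. its image is a basis of V/W) *)
Definition basis_mod (V W : X -> Prop) (I : choiceType) (e : I -> X) : Prop :=
  [/\ (forall i, V (e i)),
      (forall (s : seq I) (c : I -> R[i]), uniq s ->
          W (\sum_(i <- s) c i *: e i) -> forall i, i \in s -> c i = 0)
    & (forall v, V v -> exists (s : seq I) (c : I -> R[i]),
          W (v - \sum_(i <- s) c i *: e i))].

(* dim(V/W) = dim(V'/W') (as cardinals): bases of the two quotient spaces
   are in bijection *)
Definition eqdim_quot (V W V' W' : X -> Prop) : Prop :=
  exists (I J : choiceType) (e : I -> X) (f : J -> X),
    [/\ basis_mod V W e, basis_mod V' W' f & exists g : I -> J, bijective g].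

Definition quasi_selfadjoint (A B At : linrel) : Prop :=
  Ext A B At /\ eqdim_quot (dom At) (dom A) (dom (adj At)) (dom B).

End LinRel.

From Pilot Require Import Defs.
From mathcomp Require Import all_boot all_algebra complex reals.
From mathcomp Require Import boolp classical_sets.
From mathcomp Require Import order ring lra.
Import Order.TTheory GRing.Theory Num.Theory.
Set Implicit Arguments. Unset Strict Implicit. Unset Printing Implicit Defensive.
Local Open Scope complex_scope.
Local Open Scope ring_scope.
Local Notation Re := complex.Re.
Local Notation Im := complex.Im.

(* Write [J (x, y) = (-y, x)]. Every [(x, y)] in [adj B] splits as [(p, q) + (r1, r2)] with
   [(p, q)] in [At] and [(r1, r2)] orthogonal to [At] (projection theorem in [X * X]); then
   [(r1, r2)] is still in [adj B], and [J (r1, r2)] is in [adj At]. The hypotheses on the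
   singular parts and on [mul0 (adj B)], [ker (adj A)] say that an element of [adj B]
   orthogonal to [A] with first component in [dom A] vanishes, and symmetrically with [A] and
   [B] exchanged. Consequently [mul0 (adj B)] is contained in [mul0 A], so an element of
   [adj B] with first component in [dom At] lies in [At]. With these two facts,
   [x + dom At |-> -r2 + dom B] is an isomorphism from [dom (adj B) / dom At] onto
   [dom (adj At) / dom B], and the assumed equality of dimensions transfers. *)

Section ComplexReal.
Variable R : realType.
Implicit Types (z w : R[i]) (k : R).

Lemma ReD z w : Re (z + w) = Re z + Re w. Proof. by case: z => a b; case: w => c d; simpc. Qed.
Lemma ReN z : Re (- z) = - Re z. Proof. by case: z => a b; simpc. Qed.
Lemma ReJ z : Re (z^*) = Re z. Proof. by case: z => a b; simpc. Qed.
Lemma Re_realM k z : Re (k%:C * z) = k * Re z. Proof. by case: z => a b; simpc. Qed.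
Lemma conj_realM k z : (k%:C * z)^* = k%:C * z^*. Proof. by case: z => a b; simpc. Qed.

Lemma Re_conjM z : Re (z^* * z) = Re z ^+ 2 + Im z ^+ 2.
Proof. by case: z => a b; simpc => /=; ring. Qed.

Lemma Re_conjM_ge0 z : 0 <= Re (z^* * z).
Proof. by rewrite Re_conjM addr_ge0 // sqr_ge0. Qed.

Lemma Re_conjM_le0 z : Re (z^* * z) <= 0 -> z = 0.
Proof.
case: z => a b; rewrite Re_conjM /= => h.
have /eqP : a ^+ 2 = 0 by apply/eqP; rewrite eq_le sqr_ge0 andbT; nra.
have /eqP : b ^+ 2 = 0 by apply/eqP; rewrite eq_le sqr_ge0 andbT; nra.
by rewrite !sqrf_eq0 => /eqP -> /eqP ->.
Qed.

Lemma ge0_realE z : 0 <= z -> z = (Re z)%:C.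
Proof. by case: z => a b; rewrite lecE /= => /andP[/eqP -> _]. Qed.

Lemma gt0_realE z : 0 < z -> z = (Re z)%:C /\ 0 < Re z.
Proof. by case: z => a b; rewrite ltcE /= => /andP[/eqP -> ->]. Qed.

Lemma ltr0c k : (0 < k%:C) = (0 < k). Proof. by rewrite ltcE /= eqxx. Qed.

Lemma norm_real k : 0 <= k -> `|k%:C| = k%:C.
Proof. by move=> k0; rewrite ger0_norm // ler0c. Qed.
End ComplexReal.

Lemma invS_lt_eventually (R : realType) (r : R) :
  0 < r -> exists N, forall n, (N <= n)%N -> n.+1%:R^-1 < r.
Proof.
move=> r0; exists (Num.bound r^-1) => n Nn.
rewrite invf_plt ?posrE ?ltr0Sn //.
apply: lt_le_trans (archi_boundP _) _; first by rewrite invr_ge0 ltW.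
by rewrite ler_nat (leq_trans Nn).
Qed.

Section InnerProduct.
Variables (R : realType) (Y : lmodType R[i]) (ip : Y -> Y -> R[i]).
Hypothesis HY : is_hilbert ip.
Implicit Types (x y z : Y) (a : R[i]) (k : R).

Lemma ipDl x y z : ip (x + y) z = ip x z + ip y z.
Proof.
by case: HY => lin _ _ _ _; have := lin 1 x y z; rewrite scale1r mul1r.
Qed.

Lemma ip0l z : ip 0 z = 0.
Proof. by apply: (@addrI _ (ip 0 z)); rewrite -ipDl !addr0. Qed.

Lemma ipZl a x z : ip (a *: x) z = a * ip x z.
Proof.
by case: HY => lin _ _ _ _; have := lin a x 0 z; rewrite addr0 ip0l addr0.
Qed.

Lemma ipNl x z : ip (- x) z = - ip x z.
Proof. by rewrite -scaleN1r ipZl mulN1r. Qed.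

Lemma ipBl x y z : ip (x - y) z = ip x z - ip y z.
Proof. by rewrite ipDl ipNl. Qed.

Lemma ipC x y : ip y x = (ip x y)^*.
Proof. by case: HY. Qed.

Lemma ip0r z : ip z 0 = 0.
Proof. by rewrite ipC ip0l rmorph0. Qed.

Lemma ipDr x y z : ip z (x + y) = ip z x + ip z y.
Proof. by rewrite ipC ipDl rmorphD [ip z x]ipC [ip z y]ipC. Qed.

Lemma ipZr a x z : ip z (a *: x) = a^* * ip z x.
Proof. by rewrite ipC ipZl rmorphM [ip z x]ipC. Qed.

Lemma ipNr x z : ip z (- x) = - ip z x.
Proof. by rewrite ipC ipNl rmorphN [ip z x]ipC. Qed.

Lemma Re_ipC x y : Re (ip y x) = Re (ip x y).
Proof. by rewrite ipC ReJ. Qed.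

Lemma Re_ipZl k x y : Re (ip (k%:C *: x) y) = k * Re (ip x y).
Proof. by rewrite ipZl Re_realM. Qed.

Lemma Re_ipZr k x y : Re (ip y (k%:C *: x)) = k * Re (ip y x).
Proof. by rewrite Re_ipC Re_ipZl Re_ipC. Qed.

Definition sqnorm x : R := Re (ip x x).

Lemma ip_sqnorm x : ip x x = (sqnorm x)%:C.
Proof. by case: HY => _ _ ge0 _ _; apply: ge0_realE. Qed.

Lemma sqnorm_ge0 x : 0 <= sqnorm x.
Proof. by case: HY => _ _ ge0 _ _; have := ge0 x; rewrite ip_sqnorm ler0c. Qed.

Lemma sqnorm_le0 x : sqnorm x <= 0 -> x = 0.
Proof.
move=> x_le0; case: HY => _ _ _ def _; apply: def.
by rewrite ip_sqnorm (@le_anti _ _ (sqnorm x) 0) ?x_le0 ?sqnorm_ge0.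
Qed.

Lemma sqnormD x y : sqnorm (x + y) = sqnorm x + sqnorm y + 2 * Re (ip x y).
Proof. by rewrite /sqnorm ipDl !ipDr !ReD [Re (ip y x)]Re_ipC; ring. Qed.

Lemma sqnormN x : sqnorm (- x) = sqnorm x.
Proof. by rewrite /sqnorm ipNl ipNr opprK. Qed.

Lemma sqnormB x y : sqnorm (x - y) = sqnorm x + sqnorm y - 2 * Re (ip x y).
Proof. by rewrite sqnormD sqnormN ipNr ReN; ring. Qed.

Lemma sqnormZ a x : sqnorm (a *: x) = Re (a^* * a) * sqnorm x.
Proof.
rewrite {1}/sqnorm ipZl ipZr ip_sqnorm mulrA [a * _]mulrC [_ * _%:C]mulrC Re_realM.
exact: mulrC.
Qed.

Lemma sqnorm_realZ k x : sqnorm (k%:C *: x) = k ^+ 2 * sqnorm x.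
Proof. by rewrite sqnormZ /=; congr (_ * _); ring. Qed.

Lemma sqnorm_parallelogram x y :
  sqnorm (x + y) + sqnorm (x - y) = 2 * sqnorm x + 2 * sqnorm y.
Proof. by rewrite sqnormD sqnormB; ring. Qed.

Lemma add_ipxx_eq0 x y :
  ip x x + ip y y = 0 -> x = 0 /\ y = 0.
Proof.
rewrite !ip_sqnorm -rmorphD => /(congr1 (@complex.Re R)) /= xy0.
have := sqnorm_ge0 x; have := sqnorm_ge0 y.
by split; apply: sqnorm_le0; lra.
Qed.

Lemma norm_nsq x : `|nsq ip x| = (sqnorm x)%:C.
Proof. by rewrite /nsq ip_sqnorm norm_real // sqnorm_ge0. Qed.

Definition sqnorm_cvg (u : nat -> Y) x := forall r : R, 0 < r ->
  exists N, forall n, (N <= n)%N -> sqnorm (u n - x) < r.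

Lemma cvg_toP u x : cvg_to ip u x <-> sqnorm_cvg u x.
Proof.
split=> ux r r0.
  have r0' : 0 < r%:C by rewrite ltr0c.
  have [N uxN] := ux _ r0'.
  by exists N => n /uxN; rewrite norm_nsq ltcR.
have [-> r0'] := gt0_realE r0.
by have [N uxN] := ux _ r0'; exists N => n /uxN; rewrite norm_nsq ltcR.
Qed.

Lemma sqnorm_cauchy_cvg (u : nat -> Y) :
  (forall r : R, 0 < r -> exists N, forall n m, (N <= n)%N -> (N <= m)%N ->
     sqnorm (u n - u m) < r) ->
  exists x, sqnorm_cvg u x.
Proof.
move=> cu; case: HY => _ _ _ _ complete.
have [|x ux] := complete u; last by exists x; apply/cvg_toP.
move=> r r0; have [-> r0'] := gt0_realE r0.
by have [N uN] := cu _ r0'; exists N => n m Nn Nm; rewrite norm_nsq ltcR uN.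
Qed.

(* The bound comes from [0 <= sqnorm (u n - t w)] with [t = e / (sqnorm w + 1)]. *)
Lemma Re_ip_cvg0 (u : nat -> Y) w : sqnorm_cvg u 0 ->
  forall e, 0 < e -> exists N, forall n, (N <= n)%N -> Re (ip (u n) w) < e.
Proof.
move=> u0 e e0; set t := e / (sqnorm w + 1).
have w0 := sqnorm_ge0 w.
have t0 : 0 < t by rewrite divr_gt0 // ltr_wpDl.
have te : t * sqnorm w + t = e.
  by rewrite /t; field; rewrite gt_eqF // ltr_wpDl.
have [N uN] := u0 (t * e) (mulr_gt0 t0 e0).
exists N => n /uN; rewrite subr0 => un.
have := sqnorm_ge0 (u n - t%:C *: w).
rewrite sqnormB sqnorm_realZ Re_ipZr => h.
by rewrite -(ltr_pM2l t0); nra.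
Qed.

Lemma ip_lim_eq (u v : nat -> Y) p q x y :
  sqnorm_cvg u p -> sqnorm_cvg v q ->
  (forall n, ip (u n) x = ip (v n) y) -> ip p x = ip q y.
Proof.
move=> up vq uv; apply/eqP; rewrite -subr_eq0; apply/eqP.
set d := ip p x - ip q y.
have dE n : d = ip (p - u n) x + ip (v n - q) y by rewrite /d !ipBl uv; ring.
apply: Re_conjM_le0; apply/ler_addgt0Pr => e e0; rewrite add0r.
have e2 : 0 < e / 2 by rewrite divr_gt0.
have pu0 : sqnorm_cvg (fun n => p - u n) 0.
  by move=> r /up [N uN]; exists N => n /uN; rewrite subr0 -sqnormN opprB.
have vq0 : sqnorm_cvg (fun n => v n - q) 0.
  by move=> r /vq [N vN]; exists N => n /vN; rewrite subr0.
have [N1 h1] := Re_ip_cvg0 (d *: x) pu0 e2.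
have [N2 h2] := Re_ip_cvg0 (d *: y) vq0 e2.
set n := maxn N1 N2.
have := h1 n (leq_maxl _ _); have := h2 n (leq_maxr _ _); rewrite !ipZr => a b.
rewrite [X in d^* * X](dE n) mulrDr ReD (splitr e); apply: ltW; exact: ltrD.
Qed.
End InnerProduct.

Section Projection.
Variables (R : realType) (Y : lmodType R[i]) (ip : Y -> Y -> R[i]).
Hypothesis HY : is_hilbert ip.
Variable S : Y -> Prop.
Hypotheses (S0 : S 0) (SD : forall x y, S x -> S y -> S (x + y))
  (SZ : forall a x, S x -> S (a *: x))
  (Scl : forall u x, (forall n, S (u n)) -> cvg_to ip u x -> S x).
Implicit Types (x y z : Y).
Local Notation sqn := (sqnorm ip).

Lemma scale_half_add x : (2^-1 : R)%:C *: (x + x) = x.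
Proof.
have -> : x + x = (1 + 1) *: x by rewrite scalerDl scale1r.
rewrite scalerA -[1 + 1 : R[i]]/(2%:R) -(rmorph_nat (real_complex R)) -rmorphM.
by rewrite mulVf ?pnatr_eq0 // scale1r.
Qed.

(* Parallelogram law for [z - s] and [z - t]; their half-sum [z - (s + t)/2] has squared norm
   at least [d] since [(s + t)/2] lies in [S]. *)
Lemma near_minimizers_close z d s t e1 e2 :
  (forall m, S m -> d <= sqn (z - m)) -> S s -> S t ->
  sqn (z - s) < d + e1 -> sqn (z - t) < d + e2 -> sqn (s - t) <= 2 * e1 + 2 * e2.
Proof.
move=> dmin Ss St zs zt.
have mid : z - (2^-1 : R)%:C *: (s + t) = (2^-1 : R)%:C *: ((z - s) + (z - t)).
  by rewrite addrACA -opprD scalerBr scale_half_add.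
have := dmin _ (SZ (2^-1 : R)%:C (SD Ss St)); rewrite mid sqnorm_realZ //.
have -> : (2^-1 : R) ^+ 2 = 4^-1 by rewrite exprVn expr2 -natrM.
set w := sqn (z - s + (z - t)) => dmid.
have := sqnorm_parallelogram HY (z - s) (z - t); rewrite -/w.
have -> : z - s - (z - t) = - (s - t) by rewrite !opprB addrC addrA subrK.
by rewrite sqnormN //; lra.
Qed.

Lemma dist_attained z : exists2 p, S p & forall s, S s -> sqn (z - p) <= sqn (z - s).
Proof.
pose E := [set r : R | exists2 s, S s & r = sqn (z - s)]%classic.
have Einf : has_inf E.
  by split; [exists (sqn (z - 0)), 0 | exists 0 => _ [s _ ->]; exact: sqnorm_ge0].
set d := inf E.
have dmin s : S s -> d <= sqn (z - s) by move=> Ss; apply: ge_inf; [case: Einf | exists s].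
have [f fmin] : {f : nat -> Y & forall n, S (f n) /\ sqn (z - f n) < d + n.+1%:R^-1}.
  apply: (choice (P := fun n s => S s /\ sqn (z - s) < d + n.+1%:R^-1)) => n.
  have n0 : 0 < n.+1%:R^-1 :> R by rewrite invr_gt0 ltr0Sn.
  by have [_ [s Ss ->] ?] := inf_adherent n0 Einf; exists s.
have [p fp] : exists p, sqnorm_cvg ip f p.
  apply: (sqnorm_cauchy_cvg HY) => r r0.
  have r4 : 0 < r / 4 by rewrite divr_gt0.
  have [N NP] := invS_lt_eventually r4.
  exists N => n m Nn Nm; have [Sn zn] := fmin n; have [Sm zm] := fmin m.
  have := near_minimizers_close dmin Sn Sm zn zm.
  (* [lra] does not accept [n.+1%:R^-1] as an atom, hence the generalization. *)
  move: (NP n Nn) (NP m Nm); move: (n.+1%:R^-1) (m.+1%:R^-1) => a b; lra.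
exists p => [|s Ss]; first by apply: Scl (fun n => (fmin n).1) _; apply/cvg_toP.
apply: le_trans (dmin s Ss); apply/ler_addgt0Pr => e e0.
have e4 : 0 < e / 4 by rewrite divr_gt0.
have fp0 : sqnorm_cvg ip (fun n => f n - p) 0.
  by move=> r /fp [N fN]; exists N => n; rewrite subr0; apply: fN.
have [N1 h1] := Re_ip_cvg0 HY (z - p) fp0 e4.
have e2 : 0 < e / 2 by rewrite divr_gt0.
have [N2 h2] := invS_lt_eventually e2.
set n := maxn N1 N2.
have [_ zn] := fmin n.
have zfn : z - f n = (z - p) - (f n - p) by rewrite opprB addrA subrK.
rewrite zfn sqnormB // [Re (ip (z - p) _)](Re_ipC HY) in zn.
move: (h1 n (leq_maxl _ _)) (h2 n (leq_maxr _ _)) (sqnorm_ge0 HY (f n - p)) zn.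
by move: (n.+1%:R^-1) => a; lra.
Qed.

(* Minimality against [p + t <z - p, s> s] for a small real [t > 0] forces [|<z - p, s>|^2 <= 0]. *)
Lemma dist_min_orth z p : S p -> (forall s, S s -> sqn (z - p) <= sqn (z - s)) ->
  forall s, S s -> ip (z - p) s = 0.
Proof.
move=> Sp pmin s Ss; set al := ip (z - p) s.
set t := (sqn s + 1)^-1.
have s0 := sqnorm_ge0 HY s.
have t0 : 0 < t by rewrite invr_gt0 ltr_wpDl.
have ts : t * sqn s + t = 1 by rewrite /t; field; rewrite gt_eqF // ltr_wpDl.
have := pmin _ (SD Sp (SZ (t%:C * al) Ss)).
have -> : z - (p + (t%:C * al) *: s) = (z - p) - (t%:C * al) *: s by rewrite opprD addrA.
rewrite [sqn (_ - _ *: s)]sqnormB // sqnormZ // (ipZr HY) -/al conj_realM.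
have -> : t%:C * al^* * (t%:C * al) = (t * t)%:C * (al^* * al) by rewrite rmorphM; ring.
rewrite -mulrA !Re_realM; have := Re_conjM_ge0 al; set q := Re (al^* * al) => q0 h.
apply: Re_conjM_le0; rewrite -/q.
have : 0 <= t * (t * sqn s * q - 2 * q) by nra.
by rewrite pmulr_rge0 //; nra.
Qed.

Lemma projection z : exists2 p, S p & forall s, S s -> ip (z - p) s = 0.
Proof.
by have [p Sp pmin] := dist_attained z; exists p => //; apply: dist_min_orth.
Qed.
End Projection.

Section Graph.
Variables (R : realType) (X : lmodType R[i]) (ip : X -> X -> R[i]).
Hypothesis HX : is_hilbert ip.
Implicit Types (u : nat -> X * X) (w : X * X).

Definition ip_pair (v w : X * X) : R[i] := ip v.1 w.1 + ip v.2 w.2.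

Lemma sqnorm_pair w : sqnorm ip_pair w = sqnorm ip w.1 + sqnorm ip w.2.
Proof. by rewrite /sqnorm /ip_pair ReD. Qed.

Lemma norm_nsq_pair w : `|nsq ip_pair w| = (sqnorm ip_pair w)%:C.
Proof.
rewrite /nsq /ip_pair !(ip_sqnorm HX) -rmorphD -sqnorm_pair norm_real //.
by rewrite sqnorm_pair addr_ge0 ?sqnorm_ge0.
Qed.

Lemma cvg_pairP u w :
  sqnorm_cvg ip_pair u w <->
  sqnorm_cvg ip (fun n => (u n).1) w.1 /\ sqnorm_cvg ip (fun n => (u n).2) w.2.
Proof.
split=> [uw | [u1 u2] r r0].
  split=> r /uw [N uN]; exists N => n /uN; rewrite sqnorm_pair.
    by have := sqnorm_ge0 HX ((u n).2 - w.2); lra.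
  by have := sqnorm_ge0 HX ((u n).1 - w.1); lra.
have r2 : 0 < r / 2 by rewrite divr_gt0.
have [N1 uN1] := u1 _ r2; have [N2 uN2] := u2 _ r2.
exists (maxn N1 N2) => n; rewrite geq_max => /andP[/uN1 ? /uN2 ?].
by rewrite sqnorm_pair; lra.
Qed.

Lemma is_hilbert_pair : is_hilbert ip_pair.
Proof.
split.
- by move=> a v w z; rewrite /ip_pair !(ipDl HX) !(ipZl HX); ring.
- by move=> v w; rewrite /ip_pair (ipC HX v.1) (ipC HX v.2) rmorphD.
- by move=> w; rewrite /ip_pair !(ip_sqnorm HX) -rmorphD ler0c addr_ge0 ?sqnorm_ge0.
- move=> [x1 x2]; rewrite /ip_pair !(ip_sqnorm HX) -rmorphD /= => /complexI x0.
  have := sqnorm_ge0 HX x1; have := sqnorm_ge0 HX x2 => x2_ge0 x1_ge0.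
  have -> : x1 = 0 by apply: (sqnorm_le0 HX); lra.
  by have -> : x2 = 0 by apply: (sqnorm_le0 HX); lra.
move=> u cu.
have cuR r : 0 < r -> exists N, forall n m, (N <= n)%N -> (N <= m)%N ->
    sqnorm ip ((u n).1 - (u m).1) + sqnorm ip ((u n).2 - (u m).2) < r.
  move=> r0; have r0' : 0 < r%:C by rewrite ltr0c.
  have [N uN] := cu _ r0'; exists N => n m Nn Nm.
  by have := uN n m Nn Nm; rewrite norm_nsq_pair ltcR sqnorm_pair.
have [x1 ux1] : exists x, sqnorm_cvg ip (fun n => (u n).1) x.
  apply: (sqnorm_cauchy_cvg HX) => r /cuR [N uN]; exists N => n m Nn Nm.
  by have := uN n m Nn Nm; have := sqnorm_ge0 HX ((u n).2 - (u m).2); lra.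
have [x2 ux2] : exists x, sqnorm_cvg ip (fun n => (u n).2) x.
  apply: (sqnorm_cauchy_cvg HX) => r /cuR [N uN]; exists N => n m Nn Nm.
  by have := uN n m Nn Nm; have := sqnorm_ge0 HX ((u n).1 - (u m).1); lra.
exists (x1, x2) => e e0; have [-> e0'] := gt0_realE e0.
have [N uN] := (proj2 (cvg_pairP u (x1, x2))) (conj ux1 ux2) _ e0'.
by exists N => n /uN; rewrite norm_nsq_pair ltcR.
Qed.

Definition orth_rel (T : linrel X) : linrel X :=
  fun x y => forall s t, T s t -> ip x s + ip y t = 0.

Lemma orth_decomp (T : linrel X) : closed_linrel ip T -> forall x y,
  exists p q, T p q /\ orth_rel T (x - p) (y - q).
Proof.
move=> [[T0 TD TZ] Tcl] x y.
have Tcl' u w : (forall n, T (u n).1 (u n).2) -> cvg_to ip_pair u w -> T w.1 w.2.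
  move=> Tu /(cvg_toP is_hilbert_pair) /cvg_pairP [u1 u2].
  by apply: Tcl Tu _ _; apply/(cvg_toP HX).
have [[p q] Tpq pqo] := projection is_hilbert_pair (S := fun w => T w.1 w.2)
  T0 (fun v w => TD _ _ _ _) (fun a w => TZ a _ _) Tcl' (x, y).
by exists p, q; split => // s t Tst; apply: (pqo (s, t)).
Qed.
End Graph.

Section LinearRelation.
Variables (R : realType) (X : lmodType R[i]).
Implicit Types (T : linrel X) (x y : X).

Lemma linrelN T : is_linrel T -> forall x y, T x y -> T (- x) (- y).
Proof. by move=> [_ _ TZ] x y /(TZ (-1)); rewrite !scaleN1r. Qed.

Lemma linrelB T : is_linrel T ->
  forall x y x' y', T x y -> T x' y' -> T (x - x') (y - y').
Proof. by move=> lT x y x' y' Txy /(linrelN lT); case: lT => _ TD _; apply: TD. Qed.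

Lemma linrel_sum T : is_linrel T -> forall (I : Type) (s : seq I) (c : I -> R[i]) (x y : I -> X),
  (forall i, T (x i) (y i)) -> T (\sum_(i <- s) c i *: x i) (\sum_(i <- s) c i *: y i).
Proof.
move=> [T0 TD TZ] I s c x y Txy; elim: s => [|i s IH]; first by rewrite !big_nil.
by rewrite !big_cons; apply: TD => //; apply: TZ.
Qed.

Lemma sum_scaleB (I : Type) (s : seq I) (c : I -> R[i]) (x y : I -> X) :
  \sum_(i <- s) c i *: (x i - y i) = \sum_(i <- s) c i *: x i - \sum_(i <- s) c i *: y i.
Proof. by rewrite -sumrB; apply: eq_bigr => i _; rewrite scalerBr. Qed.

Lemma sum_scaleN (I : Type) (s : seq I) (c : I -> R[i]) (x : I -> X) :
  \sum_(i <- s) c i *: - x i = - \sum_(i <- s) c i *: x i.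
Proof. by rewrite -sumrN; apply: eq_bigr => i _; rewrite scalerN. Qed.
End LinearRelation.

Section Adjoint.
Variables (R : realType) (X : lmodType R[i]) (ip : X -> X -> R[i]).
Hypothesis HX : is_hilbert ip.
Implicit Types (S T : linrel X) (x y : X).

Lemma adj_linrel T : is_linrel (adj ip T).
Proof.
split.
- by move=> x y _; rewrite !(ip0l HX).
- by move=> f g f' g' Tfg Tfg' x y Txy; rewrite !(ipDl HX) (Tfg _ _ Txy) (Tfg' _ _ Txy).
- by move=> a f g Tfg x y Txy; rewrite !(ipZl HX) (Tfg _ _ Txy).
Qed.

Lemma adj_closed_linrel T : closed_linrel ip (adj ip T).
Proof.
split; first exact: adj_linrel.
move=> u v f g Tuv /(cvg_toP HX) uf /(cvg_toP HX) vg x y Txy.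
by apply: (ip_lim_eq HX vg uf) => n; apply: Tuv.
Qed.

Lemma Tinf_closed_linrel T : closed_linrel ip T -> closed_linrel ip (Tinf T).
Proof.
move=> [[T0 TD TZ] Tcl]; split.
  split=> //.
  - move=> x y x' y' [-> T0y] [-> T0y']; rewrite addr0; split=> //.
    by rewrite -[0]addr0; apply: TD.
  - by move=> a x y [-> T0y]; rewrite scaler0; split=> //; rewrite -(scaler0 _ a); apply: TZ.
move=> u v x y Tuv ux vy.
have u0 n : u n = 0 by case: (Tuv n).
have x0 : x = 0.
  move/(cvg_toP HX): ux => ux.
  apply: (sqnorm_le0 HX); apply/ler_addgt0Pr => e /ux [N uN].
  by rewrite add0r; apply: ltW; have := uN N (leqnn N); rewrite u0 sub0r (sqnormN HX).
by split=> //; rewrite -x0; apply: Tcl ux vy => n; case: (Tuv n) => <-.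
Qed.

Lemma subrel_adj_sym S T : Defs.subrel S (adj ip T) -> Defs.subrel T (adj ip S).
Proof.
move=> ST x' y' Tx'y' x y Sxy.
by rewrite (ipC HX x y') -(ST x y Sxy x' y' Tx'y') -(ipC HX).
Qed.

Lemma adj_antimono S T : Defs.subrel S T -> Defs.subrel (adj ip T) (adj ip S).
Proof. by move=> ST f g Tfg x y /ST; apply: Tfg. Qed.

Lemma orth_linrel T : is_linrel (orth_rel ip T).
Proof.
split.
- by move=> s t _; rewrite !(ip0l HX) addr0.
- move=> x y x' y' o o' s t Tst; rewrite !(ipDl HX).
  by rewrite addrACA (o _ _ Tst) (o' _ _ Tst) addr0.
- by move=> a x y o s t Tst; rewrite !(ipZl HX) -mulrDr (o _ _ Tst) mulr0.
Qed.

Lemma orth_rel_adj T x y : orth_rel ip T x y -> adj ip T (- y) x.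
Proof.
move=> o s t Tst; apply/eqP; rewrite (ipNl HX) -subr_eq0 opprK.
by rewrite (o _ _ Tst).
Qed.

Lemma adj_orth_rel T f g : adj ip T f g -> orth_rel ip T g (- f).
Proof. by move=> Tfg s t Tst; rewrite (ipNl HX) (Tfg _ _ Tst) subrr. Qed.

Lemma orth_rel_self T x y : T x y -> orth_rel ip T x y -> x = 0 /\ y = 0.
Proof. by move=> Txy /(_ _ _ Txy); apply: add_ipxx_eq0. Qed.
End Adjoint.

Section DualPair.
Variables (R : realType) (X : lmodType R[i]) (ip : X -> X -> R[i]).
Hypothesis HX : is_hilbert ip.
Implicit Types (A B : linrel X) (x y : X).

(* Removing from [(x, y)] its component in the multivalued part of [adj B] leaves an element
   of the singular part of [adj B] over [dom A], hence of [A]; orthogonality to [A] then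
   forces it to vanish, and what remains lies in [mul0 (adj B)] and [ker (adj A)]. *)
Lemma adj_orth_dom_eq0 A B :
  releq (restr (Ts ip (adj ip B)) (dom A)) (Ts ip A) ->
  (forall y, mul0 (adj ip B) y -> ker (adj ip A) y -> y = 0) ->
  forall x y, adj ip B x y -> orth_rel ip A x y -> dom A x -> x = 0 /\ y = 0.
Proof.
move=> sA zB x y Bxy xyA Ax.
have [p [q [[-> Bq] pq_orth]]] :=
  orth_decomp HX (Tinf_closed_linrel HX (adj_closed_linrel HX B)) x y.
rewrite subr0 in pq_orth.
have Bs : Ts ip (adj ip B) x (y - q).
  split; last by move=> s t st; apply: pq_orth.
  by have := linrelB (adj_linrel HX B) Bxy Bq; rewrite subr0.
have Axq : A x (y - q) by have [/(_ (conj Bs Ax)) []] := sA x (y - q).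
have yq_q : ip (y - q) q = 0.
  by have := pq_orth 0 q (conj erefl Bq); rewrite (ip0r HX) add0r.
have [x0 yq0] : x = 0 /\ y - q = 0.
  have yy : ip y (y - q) = ip (y - q) (y - q).
    by rewrite (ipBl HX y q) [ip q _](ipC HX) yq_q rmorph0 subr0.
  by apply: (add_ipxx_eq0 HX); rewrite -yy; apply: xyA.
have yq : y = q by apply: subr0_eq.
split=> //; apply: zB; first by rewrite /mul0 yq.
by move=> s t Ast; have := xyA _ _ Ast; rewrite x0 !(ip0l HX) add0r => ->.
Qed.

Section Extension.
Variables A B : linrel X.
Hypotheses (cA : closed_linrel ip A) (cB : closed_linrel ip B) (AB : Defs.subrel A (adj ip B)).
Hypotheses (sB : releq (restr (Ts ip (adj ip A)) (dom B)) (Ts ip B))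
  (sA : releq (restr (Ts ip (adj ip B)) (dom A)) (Ts ip A)).
Hypotheses (zB : forall y, mul0 (adj ip B) y -> ker (adj ip A) y -> y = 0)
  (zA : forall y, mul0 (adj ip A) y -> ker (adj ip B) y -> y = 0).

Lemma adj_dom_subrel x y : adj ip B x y -> dom A x -> A x y.
Proof.
move=> Bxy [y' Axy']; have lA : is_linrel A by case: cA.
have [p [q [Apq pq_orth]]] := orth_decomp HX cA x y.
have [|/subr0_eq xp /subr0_eq yq] :=
  adj_orth_dom_eq0 sA zB (linrelB (adj_linrel HX B) Bxy (AB Apq)) pq_orth.
  by exists (y' - q); apply: linrelB.
by rewrite xp yq.
Qed.

Variable At : linrel X.
Hypothesis extAt : Ext ip A B At.

Lemma Ext_adj_dom_subrel x y : adj ip B x y -> dom At x -> At x y.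
Proof.
case: extAt => [[[_ AtD _] _] [AAt AtB]] Bxy [y' Atxy'].
have A0 : A 0 (y - y').
  apply: adj_dom_subrel; last by exists 0; case: cA => -[].
  by have := linrelB (adj_linrel HX B) Bxy (AtB _ _ Atxy'); rewrite subrr.
by have := AtD _ _ _ _ Atxy' (AAt _ _ A0); rewrite addr0 addrC subrK.
Qed.

Section Transfer.
Variables (I : choiceType) (e r1 r2 q : I -> X).
Hypotheses (r_adj : forall i, adj ip B (r1 i) (r2 i))
  (r_orth : forall i, orth_rel ip At (r1 i) (r2 i))
  (r_At : forall i, At (e i - r1 i) (q i)).

Let lAt : is_linrel At. Proof. by case: extAt => -[]. Qed.

Lemma free_mod_dom_adj :
  (forall s c, uniq s -> dom At (\sum_(j <- s) c j *: e j) -> forall i, i \in s -> c i = 0) ->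
  forall s c, uniq s -> dom B (\sum_(j <- s) c j *: - r2 j) -> forall i, i \in s -> c i = 0.
Proof.
move=> e_free s c s_uniq; rewrite sum_scaleN => Bw2.
set w1 := \sum_(j <- s) c j *: r1 j; set w2 := \sum_(j <- s) c j *: r2 j.
have Aw : adj ip A (- w2) w1.
  apply: adj_antimono (extAt.2.1) _ _ _; apply: (orth_rel_adj HX).
  exact: (linrel_sum (orth_linrel HX At) s c r_orth).
have wB : orth_rel ip B (- w2) w1.
  rewrite -[w1]opprK; apply: linrelN (orth_linrel HX B) _ _ _; apply: (adj_orth_rel HX).
  exact: (linrel_sum (adj_linrel HX B) s c r_adj).
have [_ w1_0] := adj_orth_dom_eq0 sB zA Aw wB Bw2.
apply: e_free s_uniq _; exists (\sum_(j <- s) c j *: q j).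
have -> : \sum_(j <- s) c j *: e j = \sum_(j <- s) c j *: (e j - r1 j).
  by rewrite sum_scaleB -/w1 w1_0 subr0.
exact: (linrel_sum lAt s c r_At).
Qed.

Lemma span_mod_dom_adj :
  (forall v, dom (adj ip B) v -> exists s c, dom At (v - \sum_(j <- s) c j *: e j)) ->
  forall v, dom (adj ip At) v -> exists s c, dom B (v - \sum_(j <- s) c j *: - r2 j).
Proof.
move=> e_span v [g Atvg].
have [q1 [q2 [Bq vg_orth]]] := orth_decomp HX cB v g.
have Atfg : adj ip At (v - q1) (g - q2).
  exact: (linrelB (adj_linrel HX At) Atvg (subrel_adj_sym HX extAt.2.2 Bq)).
have Bgf : adj ip B (g - q2) (- (v - q1)).
  by rewrite -[g - q2]opprK; apply: linrelN (adj_linrel HX B) _ _ _; apply: (orth_rel_adj HX).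
have [s [c [d Atd]]] := e_span _ (ex_intro _ _ Bgf).
exists s, c.
set w1 := \sum_(j <- s) c j *: r1 j; set w2 := \sum_(j <- s) c j *: r2 j.
have Atw : At (g - q2 - w1) (- (v - q1) - w2).
  apply: Ext_adj_dom_subrel.
    exact: (linrelB (adj_linrel HX B) Bgf (linrel_sum (adj_linrel HX B) s c r_adj)).
  exists (d + \sum_(j <- s) c j *: q j).
  have -> : g - q2 - w1 = (g - q2 - \sum_(j <- s) c j *: e j) + \sum_(j <- s) c j *: (e j - r1 j).
    by rewrite sum_scaleB addrA subrK.
  by case: lAt => _ AtD _; apply: AtD Atd (linrel_sum lAt s c r_At).
have w_orth : orth_rel ip At (g - q2 - w1) (- (v - q1) - w2).
  exact: (linrelB (orth_linrel HX At) (adj_orth_rel HX Atfg)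
    (linrel_sum (orth_linrel HX At) s c r_orth)).
have [_ /subr0_eq fw] := orth_rel_self HX Atw w_orth.
by rewrite sum_scaleN -/w2 -fw !opprK opprB addrC subrK; exists q2.
Qed.
End Transfer.

Lemma basis_mod_adj_dom (I : choiceType) (e : I -> X) :
  basis_mod (dom (adj ip B)) (dom At) e ->
  exists f : I -> X, basis_mod (dom (adj ip At)) (dom B) f.
Proof.
case=> eB e_free e_span; have [y Bey] := choice eB.
have cAt : closed_linrel ip At by case: extAt.
have dec i : exists r : X * X, At (e i - r.1) (y i - r.2) /\ orth_rel ip At r.1 r.2.
  have [p [q [Atpq o]]] := orth_decomp HX cAt (e i) (y i).
  by exists (e i - p, y i - q); rewrite /= !subKr.
have [r r_spec] := choice dec.
have r_adj i : adj ip B (r i).1 (r i).2.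
  have [Atr _] := r_spec i.
  have := linrelB (adj_linrel HX B) (Bey i) (extAt.2.2 _ _ Atr).
  by rewrite !subKr.
have r_orth i := (r_spec i).2.
exists (fun i => - (r i).2); split.
- by move=> i; exists (r i).1; apply: (orth_rel_adj HX).
- exact: (free_mod_dom_adj r_adj r_orth (fun i => (r_spec i).1) e_free).
- exact: (span_mod_dom_adj r_adj r_orth (fun i => (r_spec i).1) e_span).
Qed.
End Extension.
End DualPair.

Theorem theorem3p2 (R : realType) (X : lmodType R[i]) (ip : X -> X -> R[i])
  (HX : is_hilbert ip) (A B At : linrel X) :
  dual_pair ip A B ->
  releq (restr (Ts ip (adj ip A)) (dom B)) (Ts ip B) ->
  releq (restr (Ts ip (adj ip B)) (dom A)) (Ts ip A) ->
  (forall y, mul0 (adj ip B) y -> ker (adj ip A) y -> y = 0) ->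
  (forall y, mul0 (adj ip A) y -> ker (adj ip B) y -> y = 0) ->
  Ext ip A B At ->
  eqdim_quot (dom (adj ip B)) (dom At) (dom At) (dom A) ->
  quasi_selfadjoint ip A B At.
Proof.
move=> [cA [cB AB]] sB sA zB zA extAt [I [J [e [f [e_basis f_basis [g [g' gK g'K]]]]]]].
split=> //.
have [h h_basis] := basis_mod_adj_dom HX cA cB AB sB sA zB zA extAt e_basis.
by exists J, I, f, h; split=> //; exists g'; exists g.
Qed.
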